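(* Let $G$ be a directed graph in which every vertex is reachable from a vertex $s$, let $t$ be a vertex of $G$, and let $k\ge 1$ be an integer. Assume that for no $\ell\in\{k,\dots,2k-1\}$ does $G$ contain an $(s,t)$-path of length exactly $dist_G(s,t)+\ell$, and that $G$ contains an $(s,t)$-path of length at least $dist_G(s,t)+k$; let $P$ be such a path of minimum length. For $i\ge0$ let $L_i$ be the set of vertices at distance exactly $i$ from $s$. Let $p$ be the smallest integer $i\ge1$ such that $L_i$ contains more than one vertex of $P$, and let $u,v$ be the first and second vertices of $P$ (in order along $P$) lying in $L_p$. Let $x$ be the vertex of $P_{u,v}$ such that $P_{u,x}$ has length exactly $k$ (the path $P_{u,v}$ has more than $k$ edges). Let $k''=\min\{2k+1,|V(P_{v,t})|\}$ and let $z$ be the last vertex of the subpath of $P_{v,t}$ formed by its first $k''$ vertices. Let $P'$ be a path of length at most $k$ from $u$ to $x$ in the induced subgraph $G[\bigcup_{i\ge p}L_i]$. Then every vertex of $P_{v,t}$ that belongs to $P'$ lies on the subpath $P_{v,z}$.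
   Context: Paths are simple directed paths; the length of a path is its number of edges. $dist_G(a,b)$ denotes the length of a shortest directed $(a,b)$-path in $G$. For a path $P$ and vertices $a,b$ on it (with $a$ before $b$), $P_{a,b}$ denotes the subpath of $P$ from $a$ to $b$. *)

From mathcomp Require Import all_boot.
Set Implicit Arguments. Unset Strict Implicit. Unset Printing Implicit Defensive.

Section Graph.
Variables (T : finType) (e : rel T).

(* [spath a b q]: the vertex sequence a :: q is a simple directed (a,b)-path.
   Its length (number of edges) is [size q]. *)
Definition spath (a b : T) (q : seq T) : bool :=
  [&& path e a q, uniq (a :: q) & last a q == b].

Definition has_spath_len (a b : T) (n : nat) : bool :=
  [exists q : n.-tuple T, spath a b q].

(* dist a b = length of a shortest directed (a,b)-path
   (a simple path has < #|T| edges; value #|T| if b is unreachable). *)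
Definition dist (a b : T) : nat :=
  find (has_spath_len a b) (iota 0 #|T|).

Definition layer (s : T) (i : nat) : {set T} := [set w | dist s w == i].

End Graph.

From mathcomp Require Import all_boot zify.
Set Implicit Arguments. Unset Strict Implicit. Unset Printing Implicit Defensive.

(* Let f i be the distance from s to the i-th vertex of s :: P. It starts at 0
   and grows by at most one per edge, so before u it takes every value below p;
   as the layers L_1, ..., L_(p-1) meet P at most once, every vertex after u is
   at distance at least p from s. Hence a shortest (s,v)-path followed by
   P_(v,t) is a simple (s,t)-path of length p + |P_(v,t)|, and the minimality
   of P forces p + |P_(v,t)| < dist(s,t) + k (otherwise v would come no later
   than u). If P' met P_(v,t) more than 2k edges after v, then a shortest
   (s,u)-path, P' up to that vertex and the rest of P would form an (s,t)-walk
   shorter than dist(s,t). *)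

Section SeqFacts.
Variable T : Type.

Lemma last_take (x : T) q i : i <= size q -> last x (take i q) = nth x (x :: q) i.
Proof.
elim: q x i => [|y q IH] x [|i] //= hi.
by rewrite IH // (set_nth_default x).
Qed.

Lemma last_drop_nth (x : T) q i :
  i <= size q -> last (nth x (x :: q) i) (drop i q) = last x q.
Proof. by move=> hi; rewrite -last_take // -last_cat cat_take_drop. Qed.

End SeqFacts.

Lemma unit_steps_attain (f : nat -> nat) n :
  f 0 = 0 -> (forall i, i < n -> f i.+1 <= (f i).+1) ->
  forall m, m <= n -> forall c, c <= f m -> exists2 i, i <= m & f i = c.
Proof.
move=> f0 fS; elim=> [|m IH] hm c hc; first by exists 0; rewrite // f0; lia.
have [hlt|->] : c < f m.+1 \/ c = f m.+1 by lia.
- have [i hi <-] := IH (ltnW hm) c (ltnSE (leq_trans hlt (fS m hm))).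
  by exists i => //; apply: leqW.
- by exists m.+1.
Qed.

Section Distance.
Variables (T : finType) (e : rel T).

Lemma drop_path a q i : path e a q -> path e (nth a (a :: q) i) (drop i q).
Proof.
have [hi|hi] := leqP i (size q); last by rewrite drop_oversize // ltnW.
by rewrite -{1}(cat_take_drop i q) cat_path last_take // => /andP[].
Qed.

Lemma spath_has_spath_len a b q : spath e a b q -> has_spath_len e a b (size q).
Proof. by move=> hq; apply/existsP; exists (in_tuple q). Qed.

Lemma spath_size_lt a b q : spath e a b q -> size q < #|T|.
Proof. by case/and3P=> _ /card_uniqP /= hcard _; rewrite -hcard max_card. Qed.

Lemma dist_le_spath a b q : spath e a b q -> dist e a b <= size q.
Proof.
move=> hq; rewrite /dist leqNgt; apply/negP => /(before_find 0).
by rewrite nth_iota ?(spath_size_lt hq) // add0n spath_has_spath_len.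
Qed.

Lemma dist_le_path a q : path e a q -> dist e a (last a q) <= size q.
Proof.
case/shortenP=> q' hq' huniq hsub.
apply: leq_trans (dist_le_spath (q := q') _) _; first by rewrite /spath hq' huniq /=.
by apply: uniq_leq_size; [case/andP: huniq|].
Qed.

Lemma dist_spath a b : connect e a b -> exists2 q, spath e a b q & size q = dist e a b.
Proof.
case/connectP=> q0 /shortenP[q hq huniq _] ->.
have hs : spath e a (last a q) q by rewrite /spath hq huniq /=.
have hhas : has (has_spath_len e a (last a q)) (iota 0 #|T|).
  by apply/hasP; exists (size q); rewrite ?mem_iota ?(spath_size_lt hs) ?(spath_has_spath_len hs).
have hlt : dist e a (last a q) < #|T| by rewrite -(size_iota 0 #|T|) -has_find.
have := nth_find 0 hhas; rewrite -/(dist e a _) nth_iota // add0n.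
by case/existsP=> r hr; exists r; rewrite ?size_tuple.
Qed.

Lemma dist_nth_le a q i : path e a q -> i <= size q -> dist e a (nth a (a :: q) i) <= i.
Proof.
move=> hq hi; rewrite -last_take //.
by apply: leq_trans (dist_le_path (take_path i hq)) _; rewrite size_take_min geq_minl.
Qed.

Lemma dist_succ_le a b c : connect e a b -> e b c -> dist e a c <= (dist e a b).+1.
Proof.
case/dist_spath=> q /and3P[hq _ /eqP hlast] <- hbc.
have hqc : path e a (rcons q c) by rewrite rcons_path hq hlast.
by have := dist_le_path hqc; rewrite last_rcons size_rcons.
Qed.

Lemma dist_eq0 a b : connect e a b -> dist e a b = 0 -> b = a.
Proof.
case/dist_spath=> -[|x q] /and3P[_ _ /eqP hb] hsize hd; first by rewrite -hb.
by rewrite hd in hsize.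
Qed.

(* Every vertex of [a :: q] is within [dist a b] of [a], every vertex of [r]
   at least that far, and only [b] could be at exactly that distance. *)
Lemma spath_cat_farther a b c q r :
  spath e a b q -> size q = dist e a b -> spath e b c r ->
  {in r, forall w, dist e a b <= dist e a w} -> spath e a c (q ++ r).
Proof.
case/and3P=> hq huq /eqP hqb hsq /and3P[hr /andP[hbr hur] /eqP hrc] hfar.
rewrite /spath cat_path hq hqb hr last_cat hqb hrc eqxx andbT -cat_cons cat_uniq huq.
rewrite (hur : uniq r) /= !andbT; apply/hasPn=> w hwr; apply/negP=> hwq.
have hidx : index w (a :: q) <= size q by rewrite -ltnS index_mem.
have := dist_nth_le hq hidx; rewrite nth_index // => hdw.
have hlast : index w (a :: q) = size q by have := hfar w hwr; lia.
have := nth_index a hwq; rewrite hlast -last_nth hqb => hwb.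
by move: hbr; rewrite hwb hwr.
Qed.

End Distance.

Section LayersAlongPath.
Variables (T : finType) (e : rel T) (s t : T) (P : seq T).
Hypotheses (reach : forall w : T, connect e s w) (hP : spath e s t P).

Local Notation f i := (dist e s (nth s (s :: P) i)).

Let P_path : path e s P. Proof. by case/and3P: hP. Qed.
Let sP_uniq : uniq (s :: P). Proof. by case/and3P: hP. Qed.
Let P_last : last s P = t. Proof. by case/and3P: hP => _ _ /eqP. Qed.

Lemma dist_nth_succ_le i : i < size P -> f i.+1 <= (f i).+1.
Proof. by move=> hi; apply: dist_succ_le (reach _) _; move/pathP: P_path => /(_ s i hi). Qed.

Lemma dist_nth_gt0 j : 0 < j <= size P -> 0 < f j.
Proof.
case/andP=> hj0 hjn; rewrite lt0n; apply/eqP => /(dist_eq0 (reach _)) hjs.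
have := nth_uniq s (ltn0Sn (size P) : 0 < size (s :: P)) (hjn : j < size (s :: P)) sP_uniq.
by rewrite hjs eqxx; lia.
Qed.

Lemma layer_nth_card i j : i < j <= size P -> f i = f j ->
  1 < #|[set w in s :: P | w \in layer e s (f j)]|.
Proof.
case/andP=> hij hjn hfij.
have hiS : i < size (s :: P) by rewrite ltnS; apply: leq_trans (ltnW hij) hjn.
have hne : nth s (s :: P) i != nth s (s :: P) j by rewrite nth_uniq // neq_ltn hij.
have hsub : [set nth s (s :: P) i; nth s (s :: P) j]
    \subset [set w in s :: P | w \in layer e s (f j)].
  by apply/subsetP=> w; rewrite in_set2 /layer => /orP[]/eqP->; rewrite !in_set mem_nth ?hfij ?eqxx.
by apply: leq_trans (subset_leq_card hsub); rewrite cards2 hne.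
Qed.

Lemma dist_nth_ge_after p iu :
  (forall i, 1 <= i < p -> #|[set w in s :: P | w \in layer e s i]| <= 1) ->
  iu <= size P -> f iu = p -> forall j, iu < j <= size P -> p <= f j.
Proof.
move=> hsparse hiu hfu j /andP[hij hjn]; rewrite leqNgt; apply/negP => hlt.
have hpos : 0 < f j by apply: dist_nth_gt0; rewrite hjn (leq_ltn_trans (leq0n iu) hij).
have hf0 : f 0 = 0 by apply/eqP; rewrite -leqn0 (dist_nth_le P_path (leq0n _)).
have hle : f j <= f iu by rewrite hfu ltnW.
have [i hi hfi] := unit_steps_attain (f := fun i => f i) hf0 dist_nth_succ_le hiu hle.
have := hsparse (f j); rewrite hpos hlt => /(_ isT).
by rewrite leqNgt (layer_nth_card _ hfi) // (leq_ltn_trans hi hij).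
Qed.

Lemma spath_shortcut_suffix iv : iv <= size P -> (forall j, iv < j <= size P -> f iv <= f j) ->
  exists2 q, spath e s t q & size q = f iv + (size P - iv).
Proof.
move=> hiv hfar; have [q hq hsq] := dist_spath (reach (nth s (s :: P) iv)).
exists (q ++ drop iv P); last by rewrite size_cat hsq size_drop.
apply: spath_cat_farther hq hsq _ _.
  rewrite /spath drop_path // last_drop_nth // P_last eqxx.
  have -> : nth s (s :: P) iv :: drop iv P = drop iv (s :: P) by rewrite [RHS](drop_nth s).
  by rewrite drop_uniq.
move=> w hw; have hidx : index w (drop iv P) < size P - iv by rewrite -size_drop index_mem.
have -> : w = nth s (s :: P) (iv + index w (drop iv P)).+1 by rewrite /= -nth_drop nth_index.
by apply: hfar; lia.
Qed.

Lemma dist_le_detour u Q j : path e u Q -> j <= size P -> nth s (s :: P) j \in u :: Q ->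
  dist e s t <= dist e s u + size Q + (size P - j).
Proof.
move=> hQ hj hjQ; have [q /and3P[hq _ /eqP hqu] <-] := dist_spath (reach u).
set i := index (nth s (s :: P) j) (u :: Q).
have hi : i <= size Q by rewrite -ltnS index_mem.
have hwalk : path e s (q ++ take i Q ++ drop j P).
  by rewrite !cat_path hq hqu take_path //= last_take // nth_index // drop_path.
have := dist_le_path hwalk.
rewrite !last_cat hqu last_take // nth_index // last_drop_nth // P_last.
by rewrite !size_cat size_take_min size_drop; lia.
Qed.

End LayersAlongPath.

Theorem lemma3 (T : finType) (e : rel T) (s t : T) (k : nat)
  (reach : forall w : T, connect e s w)
  (hk : 1 <= k)
  (noLen : forall l : nat, k <= l <= (2 * k).-1 ->
      ~ (exists q : seq T, spath e s t q /\ size q = dist e s t + l))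
  (P : seq T)
  (hP : spath e s t P) (hPlen : dist e s t + k <= size P)
  (hPmin : forall q : seq T, spath e s t q -> dist e s t + k <= size q ->
      size P <= size q)
  (p : nat) (hp1 : 1 <= p)
  (hp : 1 < #|[set w in s :: P | w \in layer e s p]|)
  (hpmin : forall i : nat, 1 <= i < p ->
      #|[set w in s :: P | w \in layer e s i]| <= 1)
  (iu iv : nat) (huv : iu < iv) (hiv : iv < size (s :: P))
  (hu : nth s (s :: P) iu \in layer e s p)
  (hv : nth s (s :: P) iv \in layer e s p)
  (hfirst : forall j : nat, j < iv -> j != iu ->
      nth s (s :: P) j \notin layer e s p)
  (Q : seq T)
  (hQ : spath e (nth s (s :: P) iu) (nth s (s :: P) (iu + k)) Q)
  (hQlen : size Q <= k)
  (hQin : forall w : T, w \in nth s (s :: P) iu :: Q -> p <= dist e s w) :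
  let k'' := minn (2 * k).+1 (size (s :: P) - iv) in
  forall j : nat, iv <= j < size (s :: P) ->
    nth s (s :: P) j \in nth s (s :: P) iu :: Q ->
    j <= iv + k'' - 1.
Proof.
move=> k'' j /andP[hjv hjS] hjQ.
have [hPpath _ _] := and3P hP.
have hivn : iv <= size P := hiv.
have hjn : j <= size P := hjS.
have dist_layer w i : w \in layer e s i -> dist e s w = i by rewrite inE => /eqP.
have hfu := dist_layer _ _ hu; have hfv := dist_layer _ _ hv.
have hpiu : p <= iu by rewrite -hfu dist_nth_le //; lia.
have hafter := dist_nth_ge_after reach hP hpmin (ltnW (leq_trans huv hivn)) hfu.
have hshort : p + (size P - iv) < dist e s t + k.
  rewrite ltnNge; apply/negP => hlong.
  have [|q hq hsq] := spath_shortcut_suffix reach hP hivn.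
    by move=> j' hj'; rewrite hfv hafter //; lia.
  by have := hPmin q hq; rewrite hsq hfv => /(_ hlong); lia.
have [hQpath _ _] := and3P hQ.
have := dist_le_detour reach hP hQpath hjn hjQ.
by rewrite hfu /k''; lia.
Qed.
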